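(* Let $t$ be a positive integer. Then (i) $\mathfrak{d}_t(0,0)=1$; and for all integers $n,k$: (ii) $\mathfrak{d}_t(n,k)=0$ if $n<0$, or $k<0$, or $k>\min\{\lfloor (n-1+t)/2\rfloor,n\}$; (iii) otherwise, if $n>0$, then $\mathfrak{d}_t(n,k)=\mathfrak{d}_t(n-1,k-1)+\mathfrak{d}_t(n-1,k)$.
   Context: Let $x_j=x^j/j!$ for $j\ge0$ in $\mathbb{R}[x]$, let $S=\operatorname{span}\{x_j\}_{j\ge1}$, and let $D:S\to\mathbb{R}[x]$ be the linear isomorphism $D(y)=y'+y''$; put $D^{-N}=(D^{-1})^N$. For each integer $N\ge1$, $D^{-N}(x_{t-1})\in\operatorname{span}\{x_j\}_{j=1}^{t-1+N}$, and real numbers $\mathfrak{d}_t(i+N-1,i)$ ($0\le i\le t+N-2$) are defined by $D^{-N}(x_{t-1})=\sum_{i=0}^{t+N-2}(-1)^i\,\mathfrak{d}_t(i+N-1,i)\,x_{t-1+N-i}$. For any integer pair $(n,k)$ not of the form $(i+N-1,i)$ with $N\ge1$ and $0\le i\le t+N-2$, set $\mathfrak{d}_t(n,k)=0$. *)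

From HB Require Import structures.
From mathcomp Require Import all_boot all_order all_algebra.
From Stdlib Require Import ClassicalEpsilon.
Set Implicit Arguments. Unset Strict Implicit. Unset Printing Implicit Defensive.
Import Order.TTheory GRing.Theory Num.Theory.
Local Open Scope ring_scope.

Definition xj (R : realFieldType) (j : nat) : {poly R} := (j`!%:R)^-1 *: 'X^j.

(* S = span{x_j}_{j>=1} = polynomials with zero constant term *)
Definition inS (R : realFieldType) (p : {poly R}) : Prop := p`_0 = 0.

Definition Dop (R : realFieldType) (p : {poly R}) : {poly R} := p^`() + p^`(2).

(* D^{-1} : R[x] -> S, the inverse of the isomorphism D : S -> R[x]:
   the unique q in S with D q = p. *)
Definition Dinv (R : realFieldType) (p : {poly R}) : {poly R} :=
  epsilon (inhabits 0) (fun q => inS q /\ Dop q = p).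

Definition DinvN (R : realFieldType) (N : nat) (p : {poly R}) : {poly R} :=
  iter N (@Dinv R) p.

(* coefficient of x_m in p, i.e. m! * (coefficient of X^m) *)
Definition xcoef (R : realFieldType) (p : {poly R}) (m : nat) : R := m`!%:R * p`_m.

(* d_t(i+N-1, i) for N >= 1, 0 <= i <= t+N-2:
   D^{-N}(x_{t-1}) = sum_i (-1)^i d_t(i+N-1,i) x_{t-1+N-i} *)
Definition dnat (R : realFieldType) (t N i : nat) : R :=
  (-1) ^+ i * xcoef (DinvN N (xj R (t - 1))) (t - 1 + N - i).

(* d_t(n,k) for integers n,k: defined when (n,k) = (i+N-1,i) with N >= 1 and
   0 <= i <= t+N-2, i.e. 0 <= k <= n and k <= t + (n-k+1) - 2; else 0. *)
Definition dd (R : realFieldType) (t : nat) (n k : int) : R :=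
  if (0 <= k) && (k <= n) && (k <= t%:Z + (n - k + 1) - 2)
  then dnat R t (`|n|%N - `|k|%N).+1 `|k|%N
  else 0.

From HB Require Import structures.
From mathcomp Require Import all_boot all_order all_algebra.
From mathcomp Require Import zify ring.
From Stdlib Require Import ClassicalEpsilon.
Set Implicit Arguments.
Unset Strict Implicit.
Unset Printing Implicit Defensive.

Import Order.TTheory GRing.Theory Num.Theory.
Local Open Scope ring_scope.

(* Comparing coefficients in D(D^{-1} p) = p shows that the x_j-coordinates
   of D^{-1} p satisfy  [p]_m = [D^{-1} p]_(m+1) + [D^{-1} p]_(m+2).  Writing
   c_N(m) for the x_m-coordinate of D^{-N}(x_{t-1}), this is Pascal's rule
   c_N(m) = c_(N+1)(m+1) + c_(N+1)(m+2); as d_t(n,k) = (-1)^k c_(n-k+1)(t+n-2k),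
   it becomes the recursion of d_t, and the boundary values come from
   c_0 = [. = t-1], c_N(0) = 0 for N > 0 and c_N(m) = 0 for m >= t+N. *)

Section InverseOperator.
Variable R : realFieldType.
Implicit Types p q : {poly R}.

Lemma coef_Dop p m : (Dop p)`_m = p`_m.+1 *+ m.+1 + p`_m.+2 *+ (m.+2 * m.+1).
Proof. by rewrite /Dop coefD coef_deriv coef_derivn !ffactnS ffactn0 muln1 add2n. Qed.

Lemma DopD p q : Dop (p + q) = Dop p + Dop q.
Proof. by rewrite /Dop derivD derivnD addrACA. Qed.

Lemma Dop_surjective p : exists q, q`_0 = 0 /\ Dop q = p.
Proof.
elim: (size p) {-2}p (leqnn (size p)) => [|n IHn] {}p size_p.
  exists 0; rewrite coef0; split=> //.
  by move: size_p; rewrite size_poly_leq0 => /eqP ->; rewrite /Dop deriv0 linear0 addr0.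
pose a := p`_n / n.+1%:R.
have [|q [q0 Dq]] := IHn (p - Dop (a *: 'X^(n.+1))).
  apply/leq_sizeP => j le_nj.
  rewrite coefB coef_Dop !coefZ !coefXn !eqSS (@gtn_eqF n j.+1 le_nj) mulr0 mul0rn addr0.
  have [->|ne_jn] := eqVneq j n.
    by rewrite mulr1 -mulr_natr divfK ?subrr // pnatr_eq0.
  by rewrite mulr0 mul0rn subr0; apply/(leq_sizeP _ _ size_p); rewrite ltn_neqAle eq_sym ne_jn.
exists (q + a *: 'X^(n.+1)); split.
  by rewrite coefD coefZ coefXn q0 mulr0 addr0.
by rewrite DopD Dq subrK.
Qed.

Lemma Dinv_spec p : (Dinv p)`_0 = 0 /\ Dop (Dinv p) = p.
Proof. exact: (epsilon_spec (inhabits 0) (fun q => inS q /\ Dop q = p) (Dop_surjective p)). Qed.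

Lemma xcoef_Dinv p m : xcoef p m = xcoef (Dinv p) m.+1 + xcoef (Dinv p) m.+2.
Proof.
have [_ DinvK] := Dinv_spec p; move: (Dinv p) DinvK => q <-.
rewrite /xcoef coef_Dop (factS m.+1) (factS m) -(mulr_natr q`_m.+1) -(mulr_natr q`_m.+2).
by rewrite !natrM; ring.
Qed.

Lemma xcoef_eq0 p m : (xcoef p m == 0) = (p`_m == 0).
Proof. by rewrite /xcoef mulf_eq0 pnatr_eq0 (gtn_eqF (fact_gt0 m)). Qed.

Lemma size_Dinv p : (size (Dinv p) <= (size p).+1)%N.
Proof.
move: (xcoef_Dinv p); move: (Dinv p) => q rec_q.
(* beyond the size of p the coordinates of q alternate, so they must vanish *)
have alternate j k : (size p <= j)%N -> xcoef q (j.+1 + k) = (-1) ^+ k * xcoef q j.+1.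
  move=> le_pj; elim: k => [|k IHk]; first by rewrite addn0 mul1r.
  have /eqP := rec_q (j + k).
  rewrite {1}/xcoef nth_default ?mulr0; last exact: leq_trans le_pj (leq_addr k j).
  rewrite eq_sym addrC addr_eq0 => /eqP; rewrite addnS -addSn => ->.
  by rewrite IHk exprS; ring.
apply/leq_sizeP => -[|j] // /ltnSE le_pj.
have := alternate j (size q) le_pj.
rewrite {1}/xcoef nth_default ?leq_addl // mulr0 => /esym/eqP.
by rewrite mulf_eq0 signr_eq0 xcoef_eq0 => /eqP.
Qed.

End InverseOperator.

Section Coordinates.
Variables (R : realFieldType) (t : nat).
Hypothesis t_gt0 : (0 < t)%N.

Definition dcoef N m : R := xcoef (DinvN N (xj R (t - 1))) m.

Lemma dcoefS N m : dcoef N m = dcoef N.+1 m.+1 + dcoef N.+1 m.+2.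
Proof. by rewrite /dcoef /DinvN iterS xcoef_Dinv. Qed.

Lemma dcoefS0 N : dcoef N.+1 0 = 0.
Proof. by rewrite /dcoef /DinvN iterS /xcoef (proj1 (Dinv_spec _)) mulr0. Qed.

Lemma dcoef0 m : dcoef 0 m = (m == (t - 1)%N)%:R.
Proof.
rewrite /dcoef /xcoef /= /xj coefZ coefXn.
by case: eqP => [->|_]; rewrite ?mulr0 // mulr1 mulfV // pnatr_eq0 (gtn_eqF (fact_gt0 _)).
Qed.

Lemma size_DinvN N : (size (DinvN N (xj R (t - 1))) <= t + N)%N.
Proof.
elim: N => [|N IHN].
  by rewrite addn0 (leq_trans (size_scale_leq _ _)) // size_polyXn subn1 prednK.
by rewrite /DinvN iterS (leq_trans (size_Dinv _)) // addnS ltnS.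
Qed.

Lemma dcoef_eq0 N m : (t + N <= m)%N -> dcoef N m = 0.
Proof.
by move=> le_m; rewrite /dcoef /xcoef nth_default ?mulr0 // (leq_trans (size_DinvN N)).
Qed.

Lemma dd_natE (n k : nat) : (k <= n.+1)%N -> (k + k <= n + t)%N ->
  dd R t n k = (-1) ^+ k * dcoef (n.+1 - k) (t + n - (k + k)).
Proof.
move=> le_k_Sn le_kk; rewrite /dd /dnat -/(dcoef _ _) /=.
case: ifP => [/andP[le_kn _] | /negbT unguarded].
  by congr (_ * dcoef _ _); lia.
have [lt_kSn | eq_k] : (k < n.+1)%N \/ k = n.+1 by lia.
  have -> : (t + n - (k + k) = 0)%N.
    apply/eqP; rewrite subn_eq0; apply: contraNT unguarded; rewrite -ltnNge => lt_kk.
    apply/andP; split; lia.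
  by rewrite subSn // dcoefS0 mulr0.
rewrite eq_k subnn dcoef0 (_ : (_ == _) = false) ?mulr0 //.
by apply/negbTE/eqP; lia.
Qed.

Lemma dd_recS (a b : nat) : (b <= a.+1)%N -> (b + b <= a + t)%N ->
  dd R t a.+1 b = dd R t a (b%:Z - 1) + dd R t a b.
Proof.
case: b => [|b] le_b le_bb.
  rewrite [dd R t a _]/dd /= add0r !dd_natE //.
  rewrite !subn0 !expr0 !mul1r addnS (dcoefS a.+1 (t + a)).
  by rewrite [dcoef a.+2 _.+2]dcoef_eq0 ?addr0 // !addnS.
rewrite -predn_int //=.
rewrite !dd_natE; [|lia..].
set M := (t + a - (b.+1 + b.+1))%N.
have -> : (t + a.+1 - (b.+1 + b.+1) = M.+1)%N by rewrite /M; lia.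
have -> : (t + a - (b + b) = M.+2)%N by rewrite /M; lia.
rewrite subSS subSn // (dcoefS (a - b) M) exprS; ring.
Qed.

Lemma dd00 : dd R t 0 0 = 1.
Proof.
rewrite dd_natE // !addn0 !subn0 expr0 mul1r.
have := dcoefS 0 (t - 1); rewrite dcoef0 eqxx subn1 prednK //.
by rewrite [dcoef 1 t.+1]dcoef_eq0 ?addn1 // addr0.
Qed.

Definition in_range (n k : int) := [&& 0 <= k, k <= n & k * 2 <= n - 1 + t%:Z].

Lemma out_of_rangeE (n k : int) :
  (n < 0 \/ k < 0 \/ Num.min ((n - 1 + t%:Z) %/ 2)%Z n < k) <-> ~~ in_range n k.
Proof.
rewrite gt_min [_ < k]ltNge lez_divRL // /in_range !negb_and -!ltNge.
split=> [[n_lt0 | [-> // | /orP[-> | ->]]] | /or3P[k_lt0 | n_lt_k | ->]]; rewrite ?orbT //.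
- by case: (ltP k 0) => //= k_ge0; rewrite (lt_le_trans n_lt0 k_ge0).
- by right; left.
- by right; right; rewrite n_lt_k orbT.
- by right; right.
Qed.

Lemma dd_out_of_range (n k : int) : ~~ in_range n k -> dd R t n k = 0.
Proof.
move=> out; rewrite /dd ifF //; apply: contraNF out => /andP[/andP[k_ge0 le_kn] le_k].
by rewrite /in_range k_ge0 le_kn /=; lia.
Qed.

End Coordinates.

Theorem lemma3p3 (R : realFieldType) (t : nat) (ht : (0 < t)%N) :
  dd R t 0 0 = 1 /\
  (forall n k : int,
      (n < 0 \/ k < 0 \/ Num.min ((n - 1 + t%:Z) %/ 2)%Z n < k) ->
      dd R t n k = 0) /\
  (forall n k : int,
      ~ (n < 0 \/ k < 0 \/ Num.min ((n - 1 + t%:Z) %/ 2)%Z n < k) ->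
      0 < n ->
      dd R t n k = dd R t (n - 1) (k - 1) + dd R t (n - 1) k).
Proof.
split; first exact: dd00.
split=> n k; rewrite out_of_rangeE; first exact: dd_out_of_range.
move=> /negP/negPn/and3P[k_ge0 le_kn le_kk] n_gt0.
case: n n_gt0 le_kn le_kk => [[|a]|] // _ le_kn le_kk.
case: k k_ge0 le_kn le_kk => [b|] // _ le_kn le_kk.
by rewrite -predn_int //= dd_recS //; lia.
Qed.
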